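(* Let $p_1,\ldots,p_n,q_1,\ldots,q_n\in(0,1]$ and $c>0$ satisfy \[ \left(\frac{p_1+q_1}{2}\cdots\frac{p_n+q_n}{2}\right)^2\le c\,p_1\cdots p_n\,q_1\cdots q_n . \] Then $\sum_{i=1}^n(p_i-q_i)^2\le O(\log c)$, where the constant in $O(\cdot)$ is absolute.
   Context: Logarithms are binary. *)

From Stdlib Require Import Reals.
Open Scope R_scope.

Fixpoint prodR (f : nat -> R) (n : nat) : R :=
  match n with
  | O => 1
  | S m => prodR f m * f m
  end.

Fixpoint sumR (f : nat -> R) (n : nat) : R :=
  match n with
  | O => 0
  | S m => sumR f m + f m
  end.

Definition log2 (x : R) : R := ln x / ln 2.

(* For a, b in (0, 1] one has ((a+b)/2)^2 = ab + (a-b)^2/4 >= ab (1 + (a-b)^2/4),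
   and 1 + d/4 >= exp (d/5) since d = (a-b)^2 lies in [0, 1]. Multiplying over i,
   exp (S/5) p_1...p_n q_1...q_n <= ((p_1+q_1)/2 ... (p_n+q_n)/2)^2 <= c p_1...p_n q_1...q_n
   with S = sum (p_i - q_i)^2, hence S <= 5 ln c = (5 ln 2) log2 c. *)
From Stdlib Require Import Reals Lra Lia Psatz.
Open Scope R_scope.

Lemma sumR_div (f : nat -> R) (k : R) (n : nat) :
  sumR (fun i => f i / k) n = sumR f n / k.
Proof.
  induction n as [|n IH]; cbn [sumR].
  - unfold Rdiv; ring.
  - rewrite IH; unfold Rdiv; ring.
Qed.

Lemma prodR_mul (f g : nat -> R) (n : nat) :
  prodR (fun i => f i * g i) n = prodR f n * prodR g n.
Proof.
  induction n as [|n IH]; cbn [prodR].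
  - ring.
  - rewrite IH; ring.
Qed.

Lemma exp_sumR (f : nat -> R) (n : nat) :
  exp (sumR f n) = prodR (fun i => exp (f i)) n.
Proof.
  induction n as [|n IH]; cbn [sumR prodR].
  - exact exp_0.
  - rewrite exp_plus, IH; reflexivity.
Qed.

Lemma prodR_pos (f : nat -> R) (n : nat) :
  (forall i, (i < n)%nat -> 0 < f i) -> 0 < prodR f n.
Proof.
  induction n as [|n IH]; intros Hf; cbn [prodR].
  - lra.
  - apply Rmult_lt_0_compat; [apply IH; intros i Hi|]; apply Hf; lia.
Qed.

Lemma prodR_nonneg (f : nat -> R) (n : nat) :
  (forall i, (i < n)%nat -> 0 <= f i) -> 0 <= prodR f n.
Proof.
  induction n as [|n IH]; intros Hf; cbn [prodR].
  - lra.
  - apply Rmult_le_pos; [apply IH; intros i Hi|]; apply Hf; lia.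
Qed.

Lemma prodR_le_compat (f g : nat -> R) (n : nat) :
  (forall i, (i < n)%nat -> 0 <= f i <= g i) -> prodR f n <= prodR g n.
Proof.
  induction n as [|n IH]; intros Hfg; cbn [prodR].
  - lra.
  - apply Rmult_le_compat.
    + apply prodR_nonneg; intros i Hi; apply Hfg; lia.
    + apply Hfg; lia.
    + apply IH; intros i Hi; apply Hfg; lia.
    + apply Hfg; lia.
Qed.

(* (1 - x/5) (1 + x/4) = 1 + x (1 - x) / 20 >= 1 on [0, 1], and exp (-x/5) >= 1 - x/5. *)
Lemma exp_div5_le (x : R) : 0 <= x <= 1 -> exp (x / 5) <= 1 + x / 4.
Proof.
  intros Hx.
  assert (Hlow : 1 - x / 5 <= exp (- (x / 5))) by apply exp_ineq1_le.
  assert (Hinv : exp (- (x / 5)) * exp (x / 5) = 1)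
    by (rewrite <- exp_plus, Rplus_opp_l; exact exp_0).
  assert (Hpos : 0 < exp (x / 5)) by apply exp_pos.
  nra.
Qed.

Lemma exp_sqr_sub_mul_le (a b : R) : 0 < a <= 1 -> 0 < b <= 1 ->
  exp ((a - b) ^ 2 / 5) * (a * b) <= ((a + b) / 2) ^ 2.
Proof.
  intros Ha Hb.
  assert (Hd : 0 <= (a - b) ^ 2 <= 1).
  { split; [apply pow2_ge_0 | simpl; nra]. }
  pose proof (exp_div5_le _ Hd) as Hexp.
  assert (Hsq : ((a + b) / 2) ^ 2 = a * b + (a - b) ^ 2 / 4) by field.
  rewrite Hsq.
  assert (Hab : 0 < a * b <= 1) by nra.
  nra.
Qed.

Lemma exp_sumR_sqr_sub_le (n : nat) (p q : nat -> R) :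
  (forall i, (i < n)%nat -> 0 < p i <= 1) ->
  (forall i, (i < n)%nat -> 0 < q i <= 1) ->
  exp (sumR (fun i => (p i - q i) ^ 2) n / 5) * (prodR p n * prodR q n)
    <= prodR (fun i => (p i + q i) / 2) n ^ 2.
Proof.
  intros Hp Hq.
  set (m := fun i => (p i + q i) / 2).
  replace (prodR m n ^ 2) with (prodR m n * prodR m n) by ring.
  rewrite <- sumR_div, exp_sumR, <- !prodR_mul.
  apply prodR_le_compat; intros i Hi.
  specialize (Hp i Hi); specialize (Hq i Hi).
  split.
  - apply Rmult_le_pos; [apply Rlt_le, exp_pos | nra].
  - replace (m i * m i) with (m i ^ 2) by ring.
    exact (exp_sqr_sub_mul_le _ _ Hp Hq).
Qed.

Theorem lemma3 :
  exists K : R, forall (n : nat) (p q : nat -> R) (c : R),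
    (forall i, (i < n)%nat -> 0 < p i <= 1) ->
    (forall i, (i < n)%nat -> 0 < q i <= 1) ->
    0 < c ->
    (prodR (fun i => (p i + q i) / 2) n) ^ 2 <= c * prodR p n * prodR q n ->
    sumR (fun i => (p i - q i) ^ 2) n <= K * log2 c.
Proof.
  exists (5 * ln 2).
  intros n p q c Hp Hq Hc Hprod.
  set (S := sumR (fun i => (p i - q i) ^ 2) n).
  assert (Hpq : 0 < prodR p n * prodR q n).
  { apply Rmult_lt_0_compat; apply prodR_pos; intros i Hi;
      [apply Hp | apply Hq]; exact Hi. }
  assert (Hexp : exp (S / 5) <= c).
  { apply (Rmult_le_reg_r _ _ _ Hpq).
    pose proof (exp_sumR_sqr_sub_le n p q Hp Hq) as Hle; fold S in Hle.
    lra. }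
  assert (Hln : S / 5 <= ln c).
  { apply Rnot_lt_le; intros Hlt.
    pose proof (exp_increasing _ _ Hlt) as Hc'; rewrite exp_ln in Hc' by exact Hc.
    lra. }
  pose proof ln_lt_2 as Hln2.
  unfold log2.
  replace (5 * ln 2 * (ln c / ln 2)) with (5 * ln c) by (field; lra).
  lra.
Qed.
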